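(* Let $M$ be an MT-algebra and define a binary relation $\prec$ on $M$ by $a\prec b$ iff there is $c\in\mathrm{cons}\,M$ with $a\le c\le b$. Then $\prec$ is a de Vries proximity on $M$ if and only if $M$ is a $T_D$-algebra.
   Context: An MT-algebra is a pair $(M,\square)$ where $M$ is a complete boolean algebra and $\square:M\to M$ satisfies $\square 1=1$, $\square(a\wedge b)=\square a\wedge\square b$, $\square a\le a$, $\square a\le\square\square a$. Write $\Diamond a=\neg\square\neg a$. An element $a$ is open if $\square a=a$, closed if $\Diamond a=a$, and locally closed if $a=\square b\wedge\Diamond c$ for some $b,c\in M$; $\mathcal O M$, $\mathcal C M$, $\mathcal{LC} M$ denote the sets of open, closed, locally closed elements. $\mathrm{cons}\,M$ is the set of finite joins of elements of $\mathcal{LC}M$ (equivalently, the boolean subalgebra of $M$ generated by $\mathcal O M$). $M$ is a $T_D$-algebra if every element of $M$ is a join of elements of $\mathcal{LC}M$. A de Vries proximity on a complete boolean algebra $A$ is a binary relation $\prec$ satisfying: $1\prec 1$; $a\prec c$ implies $a\le c$; $a\le a'\prec c'\le c$ implies $a\prec c$; $a\prec c,d$ implies $a\prec c\wedge d$; $a\prec c$ implies $\neg c\prec\neg a$; $a\prec c$ implies there is $b$ with $a\prec b\prec c$; and $a=\bigvee\{c\in A: c\prec a\}$ for every $a\in A$. *)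

From mathcomp Require Import all_boot all_order.
Set Implicit Arguments. Unset Strict Implicit. Unset Printing Implicit Defensive.
Import Order.TTheory.
Local Open Scope order_scope.

(* A boolean algebra is a [ctbDistrLatticeType d] (complemented distributive
   lattice with top and bottom); completeness is added as a Prop. *)
Section Defs.
Context {d : Order.disp_t} {T : ctbDistrLatticeType d}.

Definition is_join (S : T -> Prop) (j : T) : Prop :=
  (forall x, S x -> x <= j) /\ (forall u, (forall x, S x -> x <= u) -> j <= u).

Definition complete_lattice : Prop := forall S : T -> Prop, exists j, is_join S j.

Definition MT_operator (box : T -> T) : Prop :=
  [/\ box \top = \top,
      forall a b, box (Order.meet a b) = Order.meet (box a) (box b),
      forall a, box a <= a &
      forall a, box a <= box (box a)].

Definition dia (box : T -> T) (a : T) : T := ~` box (~` a).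

Definition is_open (box : T -> T) (a : T) : Prop := box a = a.
Definition is_closed (box : T -> T) (a : T) : Prop := dia box a = a.
Definition locally_closed (box : T -> T) (a : T) : Prop :=
  exists b c, a = box b `&` dia box c.

Definition in_cons (box : T -> T) (a : T) : Prop :=
  exists s : seq T, (forall x, x \in s -> locally_closed box x) /\
                    a = \join_(x <- s) x.

Definition TD_algebra (box : T -> T) : Prop :=
  forall a, exists S : T -> Prop, (forall x, S x -> locally_closed box x) /\ is_join S a.

Definition cons_prox (box : T -> T) (a b : T) : Prop :=
  exists c, in_cons box c /\ a <= c /\ c <= b.

Definition de_Vries_proximity (R : T -> T -> Prop) : Prop :=
  R \top \top /\
  (forall a c, R a c -> a <= c) /\
  (forall a a' c' c, a <= a' -> R a' c' -> c' <= c -> R a c) /\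
  (forall a c e, R a c -> R a e -> R a (Order.meet c e)) /\
  (forall a c, R a c -> R (~` c) (~` a)) /\
  (forall a c, R a c -> exists b, R a b /\ R b c) /\
  (forall a, is_join (fun c => R c a) a).

End Defs.

From Pilot Require Import Defs.
From mathcomp Require Import all_boot all_order.
Local Open Scope order_scope.
Import Order.TTheory Order.CTBDistrLatticeTheory.

(* The axioms of a de Vries proximity other than the approximation axiom
   [a = \/ {c | c ≺ a}] hold for [≺] in every MT-algebra: it is the relation
   "separated by an element of cons M", and cons M is a boolean subalgebra
   (locally closed elements are closed under meets and their complements are
   finite joins of locally closed elements).  The approximation axiom says
   that every element is the join of the elements of cons M below it, which,
   as elements of cons M are finite joins of locally closed ones, is exactly
   the T_D condition. *)

Lemma meet_joinsr {d : Order.disp_t} {L : bDistrLatticeType d}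
    (I : Type) (r : seq I) (P : pred I) (F : I -> L) (x : L) :
  x `&` \join_(i <- r | P i) F i = \join_(i <- r | P i) (x `&` F i).
Proof. by elim/big_rec2: _ => [|i y z _ <-]; rewrite ?meetx0 ?meetUr. Qed.

Section ConsSubalgebra.
Context {d : Order.disp_t} {M : ctbDistrLatticeType d} (box : M -> M).
Hypothesis box_MT : MT_operator box.

Lemma box_mono a b : a <= b -> box a <= box b.
Proof. by case: box_MT => _ boxI _ _ /meet_idPl <-; rewrite boxI leIr. Qed.

Lemma dia_mono a b : a <= b -> dia box a <= dia box b.
Proof. by move=> le_ab; rewrite /dia leC box_mono // leC. Qed.

Lemma le_dia a : a <= dia box a.
Proof. by case: box_MT => _ _ box_le _; rewrite /dia lexC box_le. Qed.

Lemma dia_idem a : dia box (dia box a) = dia box a.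
Proof.
case: box_MT => _ _ _ box_box; apply/eqP; rewrite eq_le le_dia andbT.
by rewrite /dia complK leC box_box.
Qed.

Lemma dia1 : dia box \top = \top.
Proof. by apply/eqP; rewrite eq_le lex1 le_dia. Qed.

Lemma diaI_closed a b :
  dia box (dia box a `&` dia box b) = dia box a `&` dia box b.
Proof.
apply/eqP; rewrite eq_le le_dia andbT lexI.
by rewrite -{2}(dia_idem a) -{3}(dia_idem b) !dia_mono ?leIl ?leIr.
Qed.

Lemma locally_closed1 : locally_closed box \top.
Proof.
by case: box_MT => box1 _ _ _; exists \top, \top; rewrite box1 dia1 meetxx.
Qed.

Lemma locally_closedI x y : locally_closed box x -> locally_closed box y ->
  locally_closed box (x `&` y).
Proof.
case: box_MT => _ boxI _ _ [b [c ->]] [b' [c' ->]].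
exists (b `&` b'), (dia box c `&` dia box c').
by rewrite boxI diaI_closed -!meetA (meetCA (dia box c)).
Qed.

Lemma in_cons_LC x : locally_closed box x -> Defs.in_cons box x.
Proof.
move=> LCx; exists [:: x]; split; last by rewrite big_seq1.
by move=> y; rewrite inE => /eqP ->.
Qed.

Lemma in_cons0 : Defs.in_cons box \bot.
Proof. by exists [::]; rewrite big_nil. Qed.

Lemma in_consU a b : Defs.in_cons box a -> Defs.in_cons box b ->
  Defs.in_cons box (a `|` b).
Proof.
move=> [s [LCs ->]] [t [LCt ->]].
exists (s ++ t); split; last by rewrite big_cat.
by move=> x; rewrite mem_cat => /orP[/LCs|/LCt].
Qed.

Lemma in_cons_joins (I : Type) (r : seq I) (P : pred I) (F : I -> M) :
  (forall i, P i -> Defs.in_cons box (F i)) ->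
  Defs.in_cons box (\join_(i <- r | P i) F i).
Proof.
move=> consF; elim/big_rec: _ => [|i a /consF]; first exact: in_cons0.
exact: in_consU.
Qed.

Lemma in_consI_LC x a : locally_closed box x -> Defs.in_cons box a ->
  Defs.in_cons box (x `&` a).
Proof.
move=> LCx [s [LCs ->]]; rewrite meet_joinsr big_seq.
by apply: in_cons_joins => y /LCs LCy; apply/in_cons_LC/locally_closedI.
Qed.

Lemma in_consI a b : Defs.in_cons box a -> Defs.in_cons box b ->
  Defs.in_cons box (a `&` b).
Proof.
move=> [s [LCs ->]] consb; rewrite meetC meet_joinsr big_seq.
by apply: in_cons_joins => x /LCs LCx; rewrite meetC; apply: in_consI_LC.
Qed.

Lemma in_cons1 : Defs.in_cons box \top.
Proof. exact/in_cons_LC/locally_closed1. Qed.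

Lemma in_cons_meets (I : Type) (r : seq I) (P : pred I) (F : I -> M) :
  (forall i, P i -> Defs.in_cons box (F i)) ->
  Defs.in_cons box (\meet_(i <- r | P i) F i).
Proof.
move=> consF; elim/big_rec: _ => [|i a /consF]; first exact: in_cons1.
exact: in_consI.
Qed.

(* The complement of [box b `&` dia c] is the closed element [dia (~` b)]
   joined with the open element [box (~` c)]. *)
Lemma in_consC_LC x : locally_closed box x -> Defs.in_cons box (~` x).
Proof.
case: box_MT => box1 _ _ _ [b [c ->]]; rewrite complI.
apply: in_consU; apply: in_cons_LC.
  by exists \top, (~` b); rewrite box1 meet1x /dia complK.
by exists (~` c), \top; rewrite dia1 meetx1 /dia complK.
Qed.

Lemma in_consC a : Defs.in_cons box a -> Defs.in_cons box (~` a).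
Proof.
move=> [s [LCs ->]]; rewrite compl_joins big_seq.
by apply: in_cons_meets => x /LCs; apply: in_consC_LC.
Qed.

End ConsSubalgebra.

Section ConsProximity.
Context {d : Order.disp_t} {M : ctbDistrLatticeType d} (box : M -> M).

Lemma cons_prox_le a b : cons_prox box a b -> a <= b.
Proof. by move=> [c [_ [le_ac le_cb]]]; apply: le_trans le_cb. Qed.

Lemma cons_prox_refl c : Defs.in_cons box c -> cons_prox box c c.
Proof. by exists c. Qed.

Lemma TD_algebraP :
  TD_algebra box <-> forall a, is_join (fun c => cons_prox box c a) a.
Proof.
split=> [TD a | join_prox a].
  split=> [c /cons_prox_le // | u ub_u].
  have [S [LC_S [ub_a lub_a]]] := TD a.
  apply: lub_a => x Sx; apply: ub_u; exists x.
  by rewrite lexx ub_a //; split; first exact/in_cons_LC/LC_S.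
exists (fun x => locally_closed box x /\ x <= a); split; first by move=> x [].
split=> [x [] // | u ub_u]; case: (join_prox a) => _; apply.
move=> b [c [[s [LCs ->]] [le_bc le_ca]]]; apply: le_trans le_bc _.
apply/joinsP_seq => x xs _; apply: ub_u; split; first exact: LCs.
by apply: le_trans le_ca; apply: joins_sup_seq.
Qed.

Hypothesis box_MT : MT_operator box.

Lemma cons_prox_de_Vries :
  de_Vries_proximity (cons_prox box) <->
  forall a, is_join (fun c => cons_prox box c a) a.
Proof.
split=> [[_ [_ [_ [_ [_ [_ join_prox]]]]]] // | join_prox].
split; first exact/cons_prox_refl/in_cons1.
split; first exact: cons_prox_le.
split.
  move=> a a' c' c le_aa' [e [conse [le_a'e le_ec']]] le_c'c.
  by exists e; rewrite (le_trans le_aa') ?(le_trans le_ec').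
split.
  move=> a c e [x [consx [le_ax le_xc]]] [y [consy [le_ay le_ye]]].
  exists (x `&` y); rewrite lexI le_ax le_ay leI2 //.
  by split; first exact: in_consI.
split.
  move=> a c [e [conse [le_ae le_ec]]].
  by exists (~` e); rewrite !leC; split; first exact: in_consC.
split; last exact: join_prox.
by move=> a c [e [conse [le_ae le_ec]]]; exists e; split; exists e.
Qed.

End ConsProximity.

Theorem lemma3p5 (d : Order.disp_t) (M : ctbDistrLatticeType d)
  (box : M -> M) :
  complete_lattice (T := M) -> MT_operator box ->
  (de_Vries_proximity (cons_prox box) <-> TD_algebra box).
Proof.
move=> _ box_MT.
exact: iff_trans (cons_prox_de_Vries _ box_MT) (iff_sym (TD_algebraP box)).
Qed.
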